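(* Let $A$ be a finite-dimensional associative superalgebra over an algebraically closed field $\mathbb{K}$ of characteristic zero whose product is not identically zero. Then $A$ does not admit simultaneously an even-symmetric structure and an odd-symmetric structure.
   Context: A superalgebra is a $\mathbb{Z}_2$-graded algebra $A=A_{\bar 0}\oplus A_{\bar 1}$ with $A_\alpha A_\beta\subseteq A_{\alpha+\beta}$; $|x|$ denotes the degree of a homogeneous element. A bilinear form $B$ on $A$ is even if $B(A_{\bar 0},A_{\bar 1})=B(A_{\bar 1},A_{\bar 0})=\{0\}$ and odd if $B(A_{\bar 0},A_{\bar 0})=B(A_{\bar 1},A_{\bar 1})=\{0\}$; supersymmetric if $B(x,y)=(-1)^{|x||y|}B(y,x)$ for homogeneous $x,y$; associative if $B(x.y,z)=B(x,y.z)$; non-degenerate if $B(x,A)=\{0\}$ implies $x=0$. An even-symmetric (resp. odd-symmetric) structure on $A$ is an even (resp. odd), supersymmetric, associative, non-degenerate bilinear form on $A$. *)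

From HB Require Import structures.
From mathcomp Require Import all_boot all_order all_algebra.
Set Implicit Arguments. Unset Strict Implicit. Unset Printing Implicit Defensive.
Import GRing.Theory.
Local Open Scope ring_scope.

(* A finite-dimensional superalgebra over K is modelled as a finite-dimensional
   K-vector space A (a vectType K) with a product mul : A -> A -> A and a
   Z_2-grading given by two subspaces Ad false = A_0 and Ad true = A_1 with
   A = A_0 (+) A_1 (direct sum).  Degrees are booleans; addition in Z_2 is xor. *)

Definition bilinear_product (K : fieldType) (A : vectType K) (mul : A -> A -> A) :=
  (forall (a : K) (x y z : A), mul (a *: x + y) z = a *: mul x z + mul y z) /\
  (forall (a : K) (x y z : A), mul z (a *: x + y) = a *: mul z x + mul z y).

Definition is_assoc_superalgebra (K : fieldType) (A : vectType K)
    (mul : A -> A -> A) (Ad : bool -> {vspace A}) :=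
  [/\ bilinear_product mul,
      (forall x y z : A, mul (mul x y) z = mul x (mul y z)),
      (Ad false + Ad true)%VS = fullv,
      directv (Ad false + Ad true)%VS &
      (forall (a b : bool) (x y : A), x \in Ad a -> y \in Ad b ->
          mul x y \in Ad (a (+) b))].

Definition bilinear_form (K : fieldType) (A : vectType K) (B : A -> A -> K) :=
  (forall (a : K) (x y z : A), B (a *: x + y) z = a * B x z + B y z) /\
  (forall (a : K) (x y z : A), B z (a *: x + y) = a * B z x + B z y).

Definition even_form (K : fieldType) (A : vectType K) (Ad : bool -> {vspace A})
    (B : A -> A -> K) :=
  forall x y : A, x \in Ad false -> y \in Ad true -> B x y = 0 /\ B y x = 0.

Definition odd_form (K : fieldType) (A : vectType K) (Ad : bool -> {vspace A})
    (B : A -> A -> K) :=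
  forall (a : bool) (x y : A), x \in Ad a -> y \in Ad a -> B x y = 0.

Definition supersymmetric (K : fieldType) (A : vectType K) (Ad : bool -> {vspace A})
    (B : A -> A -> K) :=
  forall (a b : bool) (x y : A), x \in Ad a -> y \in Ad b ->
    B x y = (-1) ^+ (a && b) * B y x.

Definition assoc_form (K : fieldType) (A : vectType K) (mul : A -> A -> A)
    (B : A -> A -> K) :=
  forall x y z : A, B (mul x y) z = B x (mul y z).

Definition nondegenerate (K : fieldType) (A : vectType K) (B : A -> A -> K) :=
  forall x : A, (forall y : A, B x y = 0) -> x = 0.

Definition even_symmetric_structure (K : fieldType) (A : vectType K)
    (mul : A -> A -> A) (Ad : bool -> {vspace A}) (B : A -> A -> K) :=
  [/\ bilinear_form B, even_form Ad B, supersymmetric Ad B,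
      assoc_form mul B & nondegenerate B].

Definition odd_symmetric_structure (K : fieldType) (A : vectType K)
    (mul : A -> A -> A) (Ad : bool -> {vspace A}) (B : A -> A -> K) :=
  [/\ bilinear_form B, odd_form Ad B, supersymmetric Ad B,
      assoc_form mul B & nondegenerate B].

(* An even structure Be and an odd structure Bo are related by the injective
   operator D defined by Be (D x) y = Bo x y.  Invariance of both forms makes D
   a right A-module map that reverses parity, and supersymmetry makes it a left
   module map up to the sign (-1)^|x|.  Computing D (D (x y)) in the two possible
   orders gives D x * D y = - D x * D y, so D x * D y = 0 as soon as 2 != 0, and
   hence x y = 0 for all homogeneous x, y. *)

From HB Require Import structures.
From mathcomp Require Import all_boot all_order all_algebra.
(* Imported after all_algebra so that [nondegenerate] is the one of Defs. *)
From Pilot Require Import Defs.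
Set Implicit Arguments. Unset Strict Implicit. Unset Printing Implicit Defensive.
Import GRing.Theory.
Local Open Scope ring_scope.

Section BilinearForm.

Variables (K : fieldType) (A : vectType K) (B : A -> A -> K).
Hypothesis B_bilinear : bilinear_form B.

Definition form_linl (y : A) : {linear A -> K^o} :=
  HB.pack (B^~ y : A -> K^o)
    (GRing.isLinear.Build K A K^o *:%R (B^~ y) (fun a x z => B_bilinear.1 a x z y)).

Definition form_linr (x : A) : {linear A -> K^o} :=
  HB.pack (B x : A -> K^o)
    (GRing.isLinear.Build K A K^o *:%R (B x) (fun a y z => B_bilinear.2 a y z x)).

Lemma form0l y : B 0 y = 0.
Proof. exact: (raddf0 (form_linl y)). Qed.

Lemma formDl x1 x2 y : B (x1 + x2) y = B x1 y + B x2 y.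
Proof. exact: (raddfD (form_linl y)). Qed.

Lemma formBl x1 x2 y : B (x1 - x2) y = B x1 y - B x2 y.
Proof. exact: (raddfB (form_linl y)). Qed.

Lemma formZl a x y : B (a *: x) y = a * B x y.
Proof. exact: (linearZ_LR (form_linl y)). Qed.

Lemma form_suml (I : Type) (r : seq I) (P : pred I) (F : I -> A) y :
  B (\sum_(i <- r | P i) F i) y = \sum_(i <- r | P i) B (F i) y.
Proof. exact: (linear_sum (form_linl y)). Qed.

Lemma formDr x y1 y2 : B x (y1 + y2) = B x y1 + B x y2.
Proof. exact: (raddfD (form_linr x)). Qed.

Lemma linear_functional_coord (g : {linear A -> K^o}) y :
  g y = \sum_(i < \dim {:A}) coord (vbasis {:A}) i y * g (vbasis {:A})`_i.
Proof.
by rewrite {1}(coord_vbasis (memvf y)) linear_sum; apply: eq_bigr => i _; rewrite linearZ.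
Qed.

(* Riesz representation: the Gram matrix of B in a basis is invertible. *)
Lemma nondegenerate_form_representation :
  nondegenerate B ->
  exists R : {linear A -> K^o} -> A, forall phi y, B (R phi) y = phi y.
Proof.
move=> B_nondeg; pose n := \dim {:A}; pose e := vbasis {:A}.
pose G := \matrix_(i < n, j < n) B e`_i e`_j.
have B_comb (v : 'rV[K]_n) (j : 'I_n) :
    B (\sum_(i < n) v 0 i *: e`_i) e`_j = (v *m G) 0 j.
  by rewrite form_suml mxE; apply: eq_bigr => i _; rewrite formZl mxE.
have B_coord x y : B x y = \sum_(j < n) coord e j y * B x e`_j.
  exact: (linear_functional_coord (form_linr x)).
have G_unit : G \in unitmx.
  rewrite unitmxE unitfE; apply/negP => /det0P [v /negP v_neq0 vG0]; apply: v_neq0.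
  have comb0 : \sum_(i < n) v 0 i *: e`_i = 0.
    apply: B_nondeg => y; rewrite B_coord; apply: big1 => j _.
    by rewrite B_comb vG0 mxE mulr0.
  apply/eqP/rowP => i; rewrite mxE.
  by rewrite -(coord_sum_free (fun i => v 0 i) i (basis_free (vbasisP _))) comb0 linear0.
exists (fun phi => \sum_(i < n) ((\row_j phi e`_j) *m invmx G) 0 i *: e`_i).
move=> phi y; rewrite B_coord (linear_functional_coord phi).
by apply: eq_bigr => j _; rewrite B_comb mulmxKV // mxE.
Qed.

End BilinearForm.

Section Grading.

Variables (K : fieldType) (A : vectType K) (Ad : bool -> {vspace A}).
Hypothesis Ad_full : (Ad false + Ad true)%VS = fullv.

Lemma homogeneous_decomposition a z :
  exists p q, [/\ p \in Ad a, q \in Ad (~~ a) & z = p + q].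
Proof.
have : z \in (Ad false + Ad true)%VS by rewrite Ad_full memvf.
case/memv_addP => u Hu [v Hv ->].
by case: a; [exists v, u; rewrite addrC | exists u, v].
Qed.

Lemma mul_eq0_homogeneous (mul : A -> A -> A) :
  bilinear_product mul ->
  (forall a b x y, x \in Ad a -> y \in Ad b -> mul x y = 0) ->
  forall x y, mul x y = 0.
Proof.
move=> [mul_linl mul_linr] mul_hom0 x y.
have mulDl u v w : mul (u + v) w = mul u w + mul v w.
  by have := mul_linl 1 u v w; rewrite !scale1r.
have mulDr u v w : mul w (u + v) = mul w u + mul w v.
  by have := mul_linr 1 u v w; rewrite !scale1r.
have [p [q [Hp Hq ->]]] := homogeneous_decomposition false x.
have [p' [q' [Hp' Hq' ->]]] := homogeneous_decomposition false y.
rewrite !mulDl !mulDr (mul_hom0 _ _ _ _ Hp Hp') (mul_hom0 _ _ _ _ Hp Hq').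
by rewrite (mul_hom0 _ _ _ _ Hq Hp') (mul_hom0 _ _ _ _ Hq Hq') !addr0.
Qed.

End Grading.

Section EvenOddPair.

Variables (K : fieldType) (A : vectType K) (mul : A -> A -> A).
Variables (Ad : bool -> {vspace A}) (Be Bo : A -> A -> K) (D : A -> A).

Hypothesis Ad_full : (Ad false + Ad true)%VS = fullv.
Hypothesis mul_graded : forall a b x y,
  x \in Ad a -> y \in Ad b -> mul x y \in Ad (a (+) b).
Hypotheses (Be_bilinear : bilinear_form Be) (Be_even : even_form Ad Be).
Hypotheses (Be_super : supersymmetric Ad Be) (Be_assoc : assoc_form mul Be).
Hypothesis Be_nondeg : nondegenerate Be.
Hypotheses (Bo_bilinear : bilinear_form Bo) (Bo_odd : odd_form Ad Bo).
Hypotheses (Bo_super : supersymmetric Ad Bo) (Bo_assoc : assoc_form mul Bo).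
Hypothesis Bo_nondeg : nondegenerate Bo.
Hypothesis D_represents : forall x y, Be (D x) y = Bo x y.
Hypothesis two_neq0 : 2%:R != 0 :> K.

Lemma Be_homogeneous_eq0 a x y : x \in Ad a -> y \in Ad (~~ a) -> Be x y = 0.
Proof.
by case: a => Hx Hy; [exact: (Be_even Hy Hx).2 | exact: (Be_even Hx Hy).1].
Qed.

Lemma Be_homogeneous_inj u v :
  (forall c z, z \in Ad c -> Be u z = Be v z) -> u = v.
Proof.
move=> Buv; apply/eqP; rewrite -subr_eq0; apply/eqP; apply: Be_nondeg => y.
have [p [q [Hp Hq ->]]] := homogeneous_decomposition Ad_full false y.
rewrite !(formDr Be_bilinear) !(formBl Be_bilinear) (Buv _ _ Hp) (Buv _ _ Hq).
by rewrite !subrr addr0.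
Qed.

Lemma D_inj u : D u = 0 -> u = 0.
Proof. by move=> Du0; apply: Bo_nondeg => y; rewrite -D_represents Du0 form0l. Qed.

Lemma DZ k u : D (k *: u) = k *: D u.
Proof.
apply: Be_homogeneous_inj => c z _.
by rewrite D_represents !(formZl Bo_bilinear, formZl Be_bilinear) D_represents.
Qed.

Lemma D_parity a x : x \in Ad a -> D x \in Ad (~~ a).
Proof.
move=> Hx; have [p [q [Hp Hq Dx_split]]] := homogeneous_decomposition Ad_full a (D x).
suff p0 : p = 0 by rewrite Dx_split p0 add0r.
apply: Be_nondeg => y; have [y1 [y2 [Hy1 Hy2 ->]]] := homogeneous_decomposition Ad_full a y.
rewrite (formDr Be_bilinear) (Be_homogeneous_eq0 Hp Hy2) addr0.
have : Be (D x) y1 = 0 by rewrite D_represents (Bo_odd Hx Hy1).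
by rewrite Dx_split (formDl Be_bilinear) (@Be_homogeneous_eq0 (~~ a) q y1 Hq) ?negbK // addr0.
Qed.

Lemma D_mulr x y : D (mul x y) = mul (D x) y.
Proof.
apply: Be_homogeneous_inj => c z _.
by rewrite D_represents Bo_assoc -D_represents Be_assoc.
Qed.

(* D w has the parity opposite to w, so the two supersymmetry signs
   (-1)^(|x||w|) and (-1)^(|x|(|w|+1)) differ by (-1)^|x|. *)
Lemma Bo_Be_twist a c x w : x \in Ad a -> w \in Ad c ->
  Bo x w = (-1) ^+ a * Be x (D w).
Proof.
move=> Hx Hw; rewrite (Bo_super Hx Hw) -D_represents (Be_super (D_parity Hw) Hx).
by case: a c {Hx Hw} => -[]; rewrite /= ?expr0 ?expr1 ?mul1r.
Qed.

Lemma D_mull a b x y : x \in Ad a -> y \in Ad b ->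
  D (mul x y) = (-1) ^+ a *: mul x (D y).
Proof.
move=> Hx Hy; apply: Be_homogeneous_inj => c z Hz.
rewrite D_represents Bo_assoc (Bo_Be_twist Hx (mul_graded Hy Hz)).
by rewrite D_mulr -Be_assoc (formZl Be_bilinear).
Qed.

Lemma mul_homogeneous_eq0 a b x y : x \in Ad a -> y \in Ad b -> mul x y = 0.
Proof.
move=> Hx Hy.
have DD_mulr : D (D (mul x y)) = (-1) ^+ (~~ a) *: mul (D x) (D y).
  by rewrite D_mulr (D_mull (D_parity Hx) Hy).
have DD_mull : D (D (mul x y)) = (-1) ^+ a *: mul (D x) (D y).
  by rewrite (D_mull Hx Hy) DZ D_mulr.
have DxDy0 : mul (D x) (D y) = 0.
  have : (-1) ^+ a *: mul (D x) (D y) *+ 2 = 0.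
    rewrite mulr2n -{1}DD_mull DD_mulr.
    by case: a {Hx DD_mulr DD_mull}; rewrite /= expr0 expr1 scale1r scaleN1r ?addNr ?addrN.
  by move/eqP; rewrite -scaler_nat !scaler_eq0 (negPf two_neq0) signr_eq0 => /eqP.
by apply/D_inj/D_inj; rewrite DD_mull DxDy0 scaler0.
Qed.

End EvenOddPair.

Theorem mainTheorem3 (K : closedFieldType) (A : vectType K)
    (mul : A -> A -> A) (Ad : bool -> {vspace A}) :
  [pchar K] =i pred0 ->
  is_assoc_superalgebra mul Ad ->
  (exists x y : A, mul x y != 0) ->
  ~ ((exists B : A -> A -> K, even_symmetric_structure mul Ad B) /\
     (exists B : A -> A -> K, odd_symmetric_structure mul Ad B)).
Proof.
move=> char0 [mul_bilinear _ Ad_full _ mul_graded] [x [y /eqP mul_neq0]].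
move=> [[Be [Be_bil Be_even Be_super Be_assoc Be_nondeg]]
        [Bo [Bo_bil Bo_odd Bo_super Bo_assoc Bo_nondeg]]].
have [R R_represents] := nondegenerate_form_representation Be_bil Be_nondeg.
pose D u := R (form_linr Bo_bil u).
have D_represents u v : Be (D u) v = Bo u v by exact: R_represents.
have two_neq0 : 2%:R != 0 :> K by rewrite (pcharf0P _).1.
apply: mul_neq0; apply: (mul_eq0_homogeneous Ad_full mul_bilinear) => a b.
exact: (mul_homogeneous_eq0 Ad_full mul_graded Be_bil Be_even Be_super
  Be_assoc Be_nondeg Bo_bil Bo_odd Bo_super Bo_assoc Bo_nondeg
  D_represents two_neq0).
Qed.
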